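(* Every $3$-uniform bi-hypergraph with exactly $6$ vertices and at most $9$ edges is colorable. Consequently $\ell(6,3)\ge 10$.
   Context: A bi-hypergraph $\mathcal H=(V,E)$ consists of a finite vertex set $V$ and a set $E$ of subsets of $V$, called edges, with no edge contained in another. It is $r$-uniform if every edge has exactly $r$ elements. A mapping $f:V\to\mathbb N$ is a proper coloring of $\mathcal H$ if $1<|f(e)|<|e|$ for every $e\in E$, where $f(e)=\{f(v):v\in e\}$. $\mathcal H$ is colorable if it has a proper coloring, and uncolorable otherwise. A subhypergraph of $\mathcal H$ is a bi-hypergraph $(V',E')$ with $V'\subseteq V$, $E'\subseteq E$. $\mathcal H$ is minimal uncolorable if it is uncolorable but every proper subhypergraph of it is colorable. $\ell(n,r)$ is the minimum number of edges of a minimal uncolorable $r$-uniform bi-hypergraph with exactly $n$ vertices ($\infty$ if none exists). *)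

From mathcomp Require Import all_boot.
Set Implicit Arguments. Unset Strict Implicit. Unset Printing Implicit Defensive.

Section BiHypergraph.
Variable T : finType.

Definition bihypergraph (V : {set T}) (E : {set {set T}}) : bool :=
  [forall e in E, e \subset V] &&
  [forall e in E, forall e' in E, (e \subset e') ==> (e == e')].

Definition uniform (r : nat) (E : {set {set T}}) : bool :=
  [forall e in E, #|e| == r].

Definition ncolors (f : T -> nat) (e : {set T}) : nat :=
  size (undup [seq f v | v <- enum e]).

Definition proper_coloring (E : {set {set T}}) (f : T -> nat) : Prop :=
  forall e, e \in E -> 1 < ncolors f e < #|e|.

(* colourability only depends on the edges; a colouring of the vertex set
   extends arbitrarily to T *)
Definition colorable (V : {set T}) (E : {set {set T}}) : Prop :=
  exists f : T -> nat, proper_coloring E f.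

Definition minimal_uncolorable (V : {set T}) (E : {set {set T}}) : Prop :=
  [/\ bihypergraph V E, ~ colorable V E &
     forall (V' : {set T}) (E' : {set {set T}}),
       V' \subset V -> E' \subset E -> bihypergraph V' E' ->
       (V', E') <> (V, E) -> colorable V' E'].

End BiHypergraph.

From mathcomp Require Import all_boot.

(* A set A of vertices "splits" an edge e when e has vertices both inside and
   outside A; colouring A with 0 and its complement with 1 then uses exactly
   two colours on e, which is proper as soon as #|e| > 2.  On 2r vertices the
   complement of an r-set is again an r-set, and an r-edge is split by an
   r-set A unless it equals A or ~: A.  The r-sets A with A or ~: A in E number
   at most 2 #|E|, so if 2 #|E| < 'C(2r, r) some r-set splits every edge.
   For r = 3 this is 18 < 20.  The bound on l(6,3) follows because a minimal
   uncolourable hypergraph is in particular uncolourable. *)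

Section SplittingColoring.
Variable T : finType.

Definition indicator_coloring (A : {set T}) (v : T) : nat :=
  if v \in A then 0 else 1.

Lemma ncolors_indicator (A e : {set T}) :
  ~~ (e \subset A) -> ~~ (e \subset ~: A) ->
  ncolors (indicator_coloring A) e = 2.
Proof.
case/subsetPn=> x xe xA; case/subsetPn=> y ye; rewrite inE negbK => yA.
rewrite /ncolors /indicator_coloring; apply/eqP; rewrite eqn_leq.
apply/andP; split.
- apply: (@uniq_leq_size _ _ [:: 0; 1]); first exact: undup_uniq.
  move=> z; rewrite mem_undup => /mapP [v _ ->].
  by case: (v \in A); rewrite !inE.
- apply: (@uniq_leq_size _ [:: 0; 1]) => // z; rewrite mem_undup !inE.
  case/orP => /eqP ->; apply/mapP.
  + by exists y; rewrite ?mem_enum ?yA.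
  + by exists x; rewrite ?mem_enum // (negbTE xA).
Qed.

Lemma splitting_set_colorable (V : {set T}) (E : {set {set T}}) (A : {set T}) :
  (forall e, e \in E -> 2 < #|e|) ->
  (forall e, e \in E -> ~~ (e \subset A) && ~~ (e \subset ~: A)) ->
  colorable V E.
Proof.
move=> big split; exists (indicator_coloring A) => e eE.
by case/andP: (split e eE) => eA eCA; rewrite ncolors_indicator // big.
Qed.

Lemma same_size_not_subset (e B : {set T}) :
  #|e| = #|B| -> e != B -> ~~ (e \subset B).
Proof. by move=> eB; apply: contraNN => sub; rewrite eqEcard sub eB /=. Qed.

Lemma exists_avoiding_set (E : {set {set T}}) (r : nat) :
  (#|E|).*2 < 'C(#|T|, r) ->
  exists A : {set T}, [/\ #|A| = r, A \notin E & ~: A \notin E].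
Proof.
move=> small.
set U := E :|: [set ~: e | e in E].
have cardU : #|U| < #|[set A : {set T} | #|A| == r]|.
  rewrite card_draws; apply: leq_ltn_trans small; rewrite -addnn.
  by apply: leq_trans (leq_card_setU _ _) _; rewrite leq_add2l leq_imset_card.
have /subsetPn [A] : ~~ ([set A : {set T} | #|A| == r] \subset U).
  by apply/negP => /subset_leq_card; rewrite leqNgt cardU.
rewrite inE => /eqP cardA AnU; exists A; split => //.
- by apply: contra AnU; rewrite inE => ->.
- apply: contra AnU => CAE; rewrite inE; apply/orP; right.
  by apply/imsetP; exists (~: A); rewrite ?setCK.
Qed.

Lemma few_edges_colorable (V : {set T}) (E : {set {set T}}) (r : nat) :
  #|T| = r.*2 -> 2 < r -> uniform r E -> (#|E|).*2 < 'C(r.*2, r) ->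
  colorable V E.
Proof.
move=> cardT r_gt2 /forallP unif small.
have sizeE e : e \in E -> #|e| = r by move=> eE; apply/eqP/(implyP (unif e)).
have := @exists_avoiding_set E r; rewrite cardT => /(_ small) [A [cardA AnE CAnE]].
have cardCA : #|~: A| = r by rewrite cardsCs setCK cardA cardT -addnn addnK.
apply: (@splitting_set_colorable V E A) => [e eE|e eE]; first by rewrite sizeE.
have neq B : B \notin E -> e != B by move=> BnE; apply: contraNneq BnE => <-.
by rewrite !same_size_not_subset ?neq // sizeE // ?cardA ?cardCA.
Qed.

End SplittingColoring.

Theorem mainTheorem9 :
  (forall (T : finType) (E : {set {set T}}),
      #|T| = 6 -> bihypergraph [set: T] E -> uniform 3 E -> #|E| <= 9 ->
      colorable [set: T] E)
  /\
  (* consequently l(6,3) >= 10 *)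
  (forall (T : finType) (E : {set {set T}}),
      #|T| = 6 -> minimal_uncolorable [set: T] E -> uniform 3 E ->
      10 <= #|E|).
Proof.
have small_colorable (T : finType) (E : {set {set T}}) :
    #|T| = 6 -> uniform 3 E -> #|E| <= 9 -> colorable [set: T] E.
  move=> cardT unif few; apply: (@few_edges_colorable T [set: T] E 3) => //.
  by apply: (@leq_ltn_trans 9.*2); rewrite ?leq_double.
split=> [T E cardT _ unif few | T E cardT [_ uncol _] unif].
  exact: small_colorable.
by rewrite leqNgt; apply/negP => many; apply/uncol/small_colorable.
Qed.
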